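(* Let $f:\mathbb{Z}^+\to \{-1,1\}$ be a function such that $|f([n])|\leq \frac{n}{\omega (n)}$ for all $n$, where $\omega$ is a function with $\omega(n)\to \infty$ as $n \to \infty$. Then, for every even $k\geq 2$, there are infinitely many $k$-blocks $B\subseteq \mathbb{Z}^+$ with $f(B)=0$.
   Context: $[n]=\{1,\dots,n\}$; for a finite set $Y$, $f(Y)=\sum_{y\in Y}f(y)$; a $k$-block is a set of $k$ consecutive integers. *)

From HB Require Import structures.
From mathcomp Require Import all_boot all_order all_algebra.
From mathcomp Require Import reals.
Set Implicit Arguments. Unset Strict Implicit. Unset Printing Implicit Defensive.
Import Order.TTheory GRing.Theory Num.Theory.

Definition prefix_sum (f : nat -> int) (n : nat) : int :=
  (\sum_(1 <= i < n.+1) f i)%R.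

Definition block_sum (f : nat -> int) (a k : nat) : int :=
  (\sum_(a <= i < a + k) f i)%R.

From HB Require Import structures.
From mathcomp Require Import all_boot all_order all_algebra.
From mathcomp Require Import reals zify.
From Stdlib Require Import Classical.
Set Implicit Arguments. Unset Strict Implicit. Unset Printing Implicit Defensive.
Import Order.TTheory GRing.Theory Num.Theory.
Local Open Scope ring_scope.

(* Let g(m) = f({m+1, ..., m+k}). For a +-1 valued f and even k every g(m) is
   even, and g(m+1) - g(m) = f(m+k+1) - f(m+1) lies in {-2, 0, 2}: g is a walk
   on the even integers with steps of size at most 2, so it cannot change sign
   without visiting 0. If it avoided 0 from some point on, it would keep a sign,
   say g >= 2, and then f([m0 + j k]) >= f([m0]) + 2 j would grow linearly,
   contradicting |f([n])| <= n / omega(n) once omega(n) >= k. *)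

Definition sign_valued (f : nat -> int) :=
  forall n : nat, (1 <= n)%N -> f n = 1 \/ f n = -1.

Lemma prefix_sumS f n : prefix_sum f n.+1 = prefix_sum f n + f n.+1.
Proof. by rewrite /prefix_sum big_nat_recr. Qed.

Lemma block_sumE f a k :
  block_sum f a.+1 k = prefix_sum f (a + k) - prefix_sum f a.
Proof.
rewrite /prefix_sum /block_sum (@big_cat_nat _ _ _ a.+1 1 (a + k).+1) //=.
- by rewrite addSn addrC addrK.
- by rewrite ltnS leq_addr.
Qed.

Lemma prefix_sumN f n : prefix_sum (fun i => - f i) n = - prefix_sum f n.
Proof. by rewrite /prefix_sum sumrN. Qed.

Lemma block_sumN f a k : block_sum (fun i => - f i) a k = - block_sum f a k.
Proof. by rewrite /block_sum sumrN. Qed.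

Lemma sign_valuedN f : sign_valued f -> sign_valued (fun i => - f i).
Proof. by move=> f_sign n /f_sign [->|->]; [right | left; rewrite opprK]. Qed.

Section SignValued.

Variable f : nat -> int.
Hypothesis f_sign : sign_valued f.

Lemma prefix_sum_parity n : (2 %| prefix_sum f n - n%:Z)%Z.
Proof.
elim: n => [|n IHn]; first by rewrite /prefix_sum big_geq.
by rewrite prefix_sumS; case: (f_sign (ltn0Sn n)) => ->; lia.
Qed.

Lemma block_sum_even a k : ~~ odd k -> (2 %| block_sum f a.+1 k)%Z.
Proof.
move=> k_even; rewrite block_sumE.
have := prefix_sum_parity (a + k); have := prefix_sum_parity a.
have : k = (k./2).*2 by rewrite -[LHS]odd_double_half (negbTE k_even).
lia.
Qed.

Lemma block_sum_step k a :
  `|block_sum f a.+2 k - block_sum f a.+1 k| <= 2.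
Proof.
rewrite !block_sumE addSn !prefix_sumS.
by case: (f_sign (ltn0Sn (a + k))) => ->; case: (f_sign (ltn0Sn a)) => ->; lia.
Qed.

End SignValued.

Lemma even_walk_keeps_sign (g : nat -> int) m0 :
  (forall m, (2 %| g m)%Z) -> (forall m, `|g m.+1 - g m| <= 2) ->
  (forall m, (m0 <= m)%N -> g m != 0) -> 0 < g m0 ->
  forall m, (m0 <= m)%N -> 2 <= g m.
Proof.
move=> g_even g_step g_nz g_pos m /subnKC <-; elim: (m - m0)%N => [|i IHi].
  by rewrite addn0; have := g_even m0; lia.
have := g_nz (m0 + i.+1)%N (leq_addr _ _); rewrite addnS.
by have := g_step (m0 + i)%N; have := g_even (m0 + i).+1%N; lia.
Qed.

Lemma increment_growth (S : nat -> int) m0 k :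
  (forall m, (m0 <= m)%N -> S m + 2 <= S (m + k)%N) ->
  forall j, S m0 + 2 * j%:Z <= S (m0 + j * k)%N.
Proof.
move=> S_incr; elim=> [|j IHj]; first by rewrite mul0n addn0 mulr0 addr0.
rewrite mulSn addnCA addnC.
by have := S_incr (m0 + j * k)%N (leq_addr _ _); lia.
Qed.

Lemma increment_growth_superlinear (S : nat -> int) m0 k N :
  (0 < k)%N -> (forall m, (m0 <= m)%N -> S m + 2 <= S (m + k)%N) ->
  exists2 n, (N <= n)%N & n%:Z < k%:Z * S n.
Proof.
move=> k_gt0 /increment_growth S_growth.
set j := (m0 + k * `|S m0| + N + 1)%N.
have jk_ge_j : (j <= j * k)%N by rewrite leq_pmulr.
exists (m0 + j * k)%N; first by lia.
have S_m0_ge : - (k%:Z * `|S m0|%N%:Z) <= k%:Z * S m0.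
  by rewrite -mulrN ler_pM2l; lia.
have : k%:Z * (S m0 + 2 * j%:Z) <= k%:Z * S (m0 + j * k)%N.
  by rewrite ler_pM2l ?S_growth //; lia.
move: S_m0_ge jk_ge_j; rewrite /j; nia.
Qed.

Lemma eventually_scaled_bound (R : realType) (S : nat -> int) (omega : nat -> R) :
  (forall M : R, exists N : nat, forall n, (N <= n)%N -> M <= omega n) ->
  (forall n, (1 <= n)%N -> `|(S n)%:~R : R| <= n%:R / omega n) ->
  forall c : nat, exists N : nat, forall n, (N <= n)%N -> c%:Z * `|S n| <= n%:Z.
Proof.
move=> omega_unbounded S_bound c.
have [N omega_ge] := omega_unbounded c.+1%:R.
exists (maxn N 1) => n; rewrite geq_max => /andP[N_le_n n_gt0].
have omega_pos : 0 < omega n by apply: lt_le_trans (omega_ge n N_le_n).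
have := S_bound n n_gt0; rewrite ler_pdivlMr // => S_omega.
have : ((`|S n| * c.+1%:Z)%:~R : R) <= (n%:Z)%:~R.
  by rewrite intrM intr_norm; apply: le_trans S_omega; rewrite ler_wpM2l ?omega_ge.
rewrite ler_int; lia.
Qed.

Lemma sublinear_sign_sum_zero_block f k N :
  sign_valued f -> (0 < k)%N -> ~~ odd k ->
  (exists N1, forall n, (N1 <= n)%N -> k%:Z * `|prefix_sum f n| <= n%:Z) ->
  exists a, (N <= a)%N /\ (1 <= a)%N /\ block_sum f a k = 0.
Proof.
move=> f_sign k_gt0 k_even [N1 S_bound]; apply: NNPP => no_zero_block.
have g_nz m : (N <= m)%N -> block_sum f m.+1 k != 0.
  by move=> N_le_m; apply/eqP => g0; apply: no_zero_block; exists m.+1; rewrite leqW.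
wlog g_pos : f f_sign S_bound no_zero_block g_nz / 0 < block_sum f N.+1 k.
  move=> gen; have := g_nz N (leqnn N); rewrite neq_lt => /orP[g_neg|]; last exact: gen.
  apply: (gen _ (sign_valuedN f_sign)) => [n /S_bound|[a]|m|]; rewrite ?block_sumN.
  - by rewrite prefix_sumN normrN.
  - move=> [N_le_a [a_gt0 /eqP]]; rewrite oppr_eq0 => /eqP g0.
    by apply: no_zero_block; exists a.
  - by rewrite oppr_eq0; apply: g_nz.
  - by rewrite oppr_gt0.
have g_ge2 := even_walk_keeps_sign (fun m => block_sum_even f_sign m k_even)
  (block_sum_step f_sign k) g_nz g_pos.
have S_incr m : (N <= m)%N -> prefix_sum f m + 2 <= prefix_sum f (m + k).
  by move=> /g_ge2; rewrite block_sumE; lia.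
have [n N1_le_n] := increment_growth_superlinear N1 k_gt0 S_incr.
by have := S_bound n N1_le_n; lia.
Qed.

Theorem theorem2p8 (R : realType) (f : nat -> int) (omega : nat -> R)
  (hf : forall n : nat, (1 <= n)%N -> f n = 1 \/ f n = -1)
  (homega : forall M : R, exists N : nat, forall n : nat, (N <= n)%N -> M <= omega n)
  (hbound : forall n : nat, (1 <= n)%N ->
     `|(prefix_sum f n)%:~R : R| <= n%:R / omega n) :
  forall k : nat, (2 <= k)%N -> ~~ odd k ->
  forall N : nat, exists a : nat, (N <= a)%N /\ (1 <= a)%N /\ block_sum f a k = 0.
Proof.
move=> k k_ge2 k_even N.
apply: sublinear_sign_sum_zero_block => //; first exact: ltnW.
exact: eventually_scaled_bound homega hbound k.
Qed.
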